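(* Consider the generalized trimmed lasso problem $$\min_{x_0,\ldots,x_L}\ f(x_0,x_1,\ldots,x_L)+\sum_{l=1}^L\gamma_l T_{K_l,m_l,p_l}(D_lx_l-c_l)$$ with $f:\mathbb{R}^{n_0+\cdots+n_L}\to\mathbb{R}$ directionally differentiable, and let $x^*=(x_0^*,\ldots,x_L^* )$ be a d-stationary point. Fix $l\in[L]$ and suppose: (A1) there is $\overline{x}_l\in\mathbb{R}^{n_l}$ with $D_l\overline{x}_l-c_l=0$; (A2) there is $\Gamma_l>0$ with $\sup_{d_l\in\mathbb{R}^{n_l},\|d_l\|_2=1}f'(x^*;(0,\ldots,0,d_l,0,\ldots,0))\le\Gamma_l$ (where $d_l$ sits in the $l$-th block). If $\gamma_l>\Gamma_l/\sigma_{K_l,m_l,p_l}(D_l)$, then $T_{K_l,m_l,p_l}(D_lx_l^*-c_l)=0$. Moreover, in the case $p_l=1$, $D_l=I$ (so $m_l=n_l$), $c_l=0$, and $f(x_0,\ldots,x_L)=g(x_0,\ldots,x_L)+\sum_{k\in[L]}\eta_k\|x_k\|_1$ with $\eta_k\ge0$ and $g$ real-valued and directionally differentiable, the same conclusion $T_{K_l,n_l,1}(x_l^* )=0$ holds whenever $\gamma_l>\Gamma_l$, where now $\Gamma_l$ is any real number with $$\sup_{d_l\in\{-1,0,1\}^{n_l},\ \|d_l\|_1=1} g'(x^*;(0,\ldots,d_l,\ldots,0))-\eta_l\le\Gamma_l.$$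
   Context: Trimmed $\ell_1$ norm: for $z=(z_1^\top,\ldots,z_m^\top)^\top\in\mathbb{R}^{mp}$, $z_i\in\mathbb{R}^p$, $K\in\{0,\ldots,m-1\}$: $T_{K,m,p}(z)=\min_{\Lambda\subset[m],|\Lambda|=m-K}\sum_{i\in\Lambda}\|z_i\|_2$. Problem data: $n_0\ge0$, $\gamma_l>0$, $K_l\in\{0,\ldots,m_l-1\}$, $c_l\in\mathbb{R}^{m_lp_l}$, $D_l\ne0$ an $m_lp_l\times n_l$ matrix. Directional derivative $h'(x;d)=\lim_{\varsigma\searrow0}(h(x+\varsigma d)-h(x))/\varsigma$; a function is directionally differentiable if this exists in $\mathbb{R}$ everywhere on its domain in feasible directions; $x^*$ is d-stationary if the directional derivative of the whole objective at $x^*$ is $\ge0$ in every direction. For a matrix $A\neq0$, $\sigma_{\min}(A)$ is its smallest nonzero singular value. For $D=((D)_1^\top,\ldots,(D)_m^\top)^\top\ne0$ with blocks $(D)_i\in\mathbb{R}^{p\times n}$ and $\Lambda\subset[m]$, $(D)_\Lambda$ is the submatrix formed by the blocks $(D)_i$, $i\in\Lambda$; define $\sigma_{K,m,p}(D)=\sigma_{\min}(D)$ if $D$ is surjective, and otherwise $\sigma_{K,m,p}(D)=\min\{\sigma_{\min}((D)_\Lambda)\mid \Lambda\subset[m],|\Lambda|=m-K,(D)_\Lambda\ne0\}$. *)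

From HB Require Import structures.
From mathcomp Require Import all_boot all_order all_algebra.
From mathcomp Require Import all_classical all_reals all_analysis.
Set Implicit Arguments. Unset Strict Implicit. Unset Printing Implicit Defensive.
Import Order.TTheory GRing.Theory Num.Theory.
Import numFieldNormedType.Exports.
Local Open Scope classical_set_scope.
Local Open Scope ring_scope.

(* index of the j-th coordinate of the i-th block (= i*p + j, standard
   row-major order of the product finType, as used by mxvec) *)
Definition blk_idx (m p : nat) (i : 'I_m) (j : 'I_p) : 'I_(m * p) :=
  mxvec_index i j.
Definition unblk (m p : nat) (k : 'I_(m * p)) : 'I_m * 'I_p :=
  enum_val (cast_ord (esym (mxvec_cast m p)) k).

Definition norm2 (R : realType) (k : nat) (v : 'cV[R]_k) : R :=
  Num.sqrt (\sum_(i < k) v i 0 ^+ 2).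
Definition norm1 (R : realType) (k : nat) (v : 'cV[R]_k) : R :=
  \sum_(i < k) `|v i 0|.

Definition block (R : realType) (m p : nat) (z : 'cV[R]_(m * p)) (i : 'I_m)
  : 'cV[R]_p := \col_(j < p) z (blk_idx i j) 0.

Definition trimmed (R : realType) (K m p : nat) (z : 'cV[R]_(m * p)) : R :=
  inf [set t : R | exists Lam : {set 'I_m},
         #|Lam| = (m - K)%N /\ t = \sum_(i in Lam) norm2 (block z i)].

(* (D)_Λ : the submatrix formed by the blocks (D)_i, i in Λ (in increasing order) *)
Definition Dsub (R : realType) (m p n : nat) (D : 'M[R]_(m * p, n))
  (Lam : {set 'I_m}) : 'M[R]_(#|Lam| * p, n) :=
  \matrix_(r < #|Lam| * p, c < n)
     D (blk_idx (enum_val (unblk r).1) (unblk r).2) c.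

(* smallest nonzero singular value: singular values of A are the square roots
   of the eigenvalues (roots of the characteristic polynomial) of A^T A *)
Definition sigma_min (R : realType) (r k : nat) (A : 'M[R]_(r, k)) : R :=
  inf [set s : R | 0 < s /\ root (char_poly (A^T *m A)) (s ^+ 2)].

Definition surjective_mx (R : realType) (r k : nat) (A : 'M[R]_(r, k)) : Prop :=
  forall y : 'cV[R]_r, exists x : 'cV[R]_k, A *m x = y.

Definition sigma_Kmp (R : realType) (K m p n : nat) (D : 'M[R]_(m * p, n)) : R :=
  if `[< surjective_mx D >] then sigma_min D
  else inf [set s : R | exists Lam : {set 'I_m},
          [/\ #|Lam| = (m - K)%N, Dsub D Lam != 0 & s = sigma_min (Dsub D Lam)]].

Definition pvec (R : realType) (N : nat) (n : 'I_N -> nat) :=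
  forall i : 'I_N, 'cV[R]_(n i).

Definition padd (R : realType) N (n : 'I_N -> nat) (x y : pvec R n) : pvec R n :=
  fun i => x i + y i.
Definition pscale (R : realType) N (n : 'I_N -> nat) (s : R) (x : pvec R n)
  : pvec R n := fun i => s *: x i.

Definition embed (R : realType) N (n : 'I_N -> nat) (l : 'I_N) (d : 'cV[R]_(n l))
  : pvec R n :=
  fun i => match l =P i with
           | ReflectT e => castmx (f_equal n e, erefl 1%N) d
           | ReflectF _ => 0
           end.

Definition dquot (R : realType) N (n : 'I_N -> nat) (h : pvec R n -> R)
  (x d : pvec R n) : R -> R :=
  fun s => (h (padd x (pscale s d)) - h x) / s.

Definition has_dderiv (R : realType) N (n : 'I_N -> nat) (h : pvec R n -> R)
  (x d : pvec R n) (v : R) : Prop :=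
  dquot h x d @ 0^'+ --> v.

Definition dderiv (R : realType) N (n : 'I_N -> nat) (h : pvec R n -> R)
  (x d : pvec R n) : R := lim (dquot h x d @ 0^'+).

Definition dir_differentiable (R : realType) N (n : 'I_N -> nat)
  (h : pvec R n -> R) : Prop :=
  forall x d : pvec R n, exists v : R, has_dderiv h x d v.

Definition dstationary (R : realType) N (n : 'I_N -> nat) (h : pvec R n -> R)
  (x : pvec R n) : Prop :=
  forall d : pvec R n, exists v : R, has_dderiv h x d v /\ 0 <= v.

(* objective f(x) + sum_{l in [L]} γ_l T_{K_l,m_l,p_l}(D_l x_l - c_l);
   block l in [L] is block (lift ord0 l) of 'I_L.+1, block 0 is x_0 *)
Definition objective (R : realType) (L : nat) (n : 'I_L.+1 -> nat)
  (m p K : 'I_L -> nat) (gam : 'I_L -> R)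
  (c : forall l : 'I_L, 'cV[R]_(m l * p l))
  (D : forall l : 'I_L, 'M[R]_(m l * p l, n (lift ord0 l)))
  (f : pvec R n -> R) : pvec R n -> R :=
  fun x => f x + \sum_(l < L)
     gam l * trimmed (K l) (D l *m x (lift ord0 l) - c l).

(* Suppose T := T_{K,m,p}(D x*_l - c) > 0 and let Λ be an index set realising T.
   By (A1) the system (D d)_i = -(D x*_l - c)_i, i ∈ Λ, is solvable (through D
   itself if D is surjective, through the submatrix (D)_Λ otherwise), and its
   minimal-norm solution satisfies σ ‖d‖ ≤ T, since σ_min(A) ‖d‖ ≤ ‖A d‖ for d
   orthogonal to ker A (spectral decomposition of AᵀA over ℂ).  Moving x*_l along
   d/‖d‖ shrinks every block in Λ linearly, so the penalty decreases at rate at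
   least γ T/‖d‖ ≥ γ σ while f increases at rate at most Γ: d-stationarity then
   forces γ σ ≤ Γ.  In the ℓ1 case one moves a single nonzero coordinate of x*_l
   lying in Λ towards 0; both T and η_l ‖x*_l‖₁ decrease at rate 1, whence
   γ + η_l ≤ g'(x*; d) ≤ Γ + η_l. *)

From HB Require Import structures.
From mathcomp Require Import all_boot all_order all_algebra.
From mathcomp Require Import all_classical all_reals all_analysis.
From mathcomp Require Import complex.
From mathcomp Require Import ring lra.
Import Order.TTheory GRing.Theory Num.Theory.
Import numFieldNormedType.Exports.
Set Implicit Arguments. Unset Strict Implicit. Unset Printing Implicit Defensive.
Local Open Scope ring_scope.
Local Open Scope classical_set_scope.
Local Open Scope sesquilinear_scope.
Notation cplx A := (map_mx (real_complex _) A).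

Lemma norm2_ge0 (R : realType) k (v : 'cV[R]_k) : 0 <= norm2 v.
Proof. exact: sqrtr_ge0. Qed.

Lemma norm2_sq (R : realType) k (v : 'cV[R]_k) : norm2 v ^+ 2 = \sum_i v i 0 ^+ 2.
Proof. by rewrite sqr_sqrtr // sumr_ge0 // => i _; exact: sqr_ge0. Qed.

Lemma norm2_sqE (R : realType) k (v : 'cV[R]_k) : norm2 v ^+ 2 = (v^T *m v) 0 0.
Proof. by rewrite norm2_sq mxE; apply: eq_bigr => i _; rewrite mxE expr2. Qed.

Lemma sum_sqr_eq0 (R : realType) (I : finType) (A : {pred I}) (a : I -> R) :
  \sum_(i in A) a i ^+ 2 = 0 -> forall i, i \in A -> a i = 0.
Proof.
move=> /eqP; rewrite psumr_eq0 => [/allP sum0 i iA|i _]; last exact: sqr_ge0.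
by move: (sum0 i (mem_index_enum i)); rewrite iA sqrf_eq0 => /eqP.
Qed.

Lemma norm2_eq0 (R : realType) k (v : 'cV[R]_k) : norm2 v = 0 -> v = 0.
Proof.
move=> v0; apply/colP => i; rewrite mxE.
by have := norm2_sq v; rewrite v0 expr0n => /esym/sum_sqr_eq0; apply.
Qed.

Lemma norm2Z (R : realType) k (a : R) (v : 'cV[R]_k) :
  norm2 (a *: v) = `|a| * norm2 v.
Proof.
rewrite /norm2 -sqrtr_sqr -sqrtrM ?sqr_ge0 // mulr_sumr; congr Num.sqrt.
by apply: eq_bigr => i _; rewrite mxE exprMn.
Qed.

Lemma norm2N (R : realType) k (v : 'cV[R]_k) : norm2 (- v) = norm2 v.
Proof. by rewrite -scaleN1r norm2Z normrN1 mul1r. Qed.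

Lemma norm20 (R : realType) k : norm2 (0 : 'cV[R]_k) = 0.
Proof. by rewrite -(scale0r 0) norm2Z normr0 mul0r. Qed.

Lemma sqrt_sum_sqr_le (R : realType) (I : finType) (A : {pred I}) (a : I -> R) :
  (forall i, 0 <= a i) -> Num.sqrt (\sum_(i in A) a i ^+ 2) <= \sum_(i in A) a i.
Proof.
move=> a_ge0; have S_ge0 : 0 <= \sum_(i in A) a i by apply: sumr_ge0.
rewrite -(ger0_norm S_ge0) -sqrtr_sqr ler_sqrt ?sqr_ge0 //.
rewrite [leRHS]expr2 mulr_sumr; apply: ler_sum => i iA.
by rewrite expr2 mulrC ler_wpM2r // (bigD1 i) //= lerDl sumr_ge0.
Qed.

Lemma gram_kernel (R : realType) r k (A : 'M[R]_(r, k)) (e : 'cV_k) :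
  A^T *m A *m e = 0 -> A *m e = 0.
Proof.
move=> AtAe; apply: norm2_eq0; apply/eqP; rewrite -sqrf_eq0 norm2_sqE.
by rewrite trmx_mul -mulmxA (mulmxA A^T) AtAe mulmx0 mxE.
Qed.

Lemma gram_eq0 (R : realType) r k (A : 'M[R]_(r, k)) : A^T *m A = 0 -> A = 0.
Proof.
move=> /matrixP AtA0; apply/matrixP => a b; rewrite mxE.
have := AtA0 b b; rewrite !mxE => AtAbb.
apply: (@sum_sqr_eq0 _ _ predT (fun c => A c b)) => //; rewrite -[RHS]AtAbb.
by apply: eq_bigr => c _; rewrite mxE expr2.
Qed.

Lemma eigenvalue_diag (F : fieldType) n (d : 'rV[F]_n) a :
  eigenvalue (diag_mx d) a = [exists i, d 0 i == a].
Proof.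
rewrite eigenvalue_root_char char_poly_trig ?diag_mx_is_trig //.
rewrite -(big_map (fun i => diag_mx d i i) xpredT (fun x => 'X - x%:P)).
rewrite root_prod_XsubC; apply/mapP/existsP => [[i _ ->]|[i /eqP <-]].
  by exists i; rewrite mxE eqxx mulr1n.
by exists i; rewrite ?mem_index_enum // mxE eqxx mulr1n.
Qed.

Lemma eigenvalue_conj (F : fieldType) n (P A : 'M[F]_n) a : P \in unitmx ->
  eigenvalue (invmx P *m A *m P) a = eigenvalue A a.
Proof.
move=> Pu; apply/eigenvalueP/eigenvalueP => -[v vA v0].
  exists (v *m invmx P); last first.
    by apply: contra_neq v0 => /(congr1 (mulmx^~ P)); rewrite mulmxKV // mul0mx.
  by have := congr1 (mulmx^~ (invmx P)) vA; rewrite !mulmxA mulmxK // scalemxAl.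
exists (v *m P); last first.
  by apply: contra_neq v0 => /(congr1 (mulmx^~ (invmx P))); rewrite mulmxK // mul0mx.
by rewrite !mulmxA mulmxK // scalemxAl; congr (_ *m _).
Qed.

Lemma root_char_poly_complex (R : realType) n (M : 'M[R]_n) (x : R) :
  root (char_poly M) x = eigenvalue (cplx M) x%:C%C.
Proof.
by rewrite -(fmorph_root (real_complex R)) map_char_poly eigenvalue_root_char.
Qed.

Lemma adjmx_real (R : realType) a b (A : 'M[R]_(a, b)) : (cplx A)^t* = cplx A^T.
Proof. by apply/matrixP => i j; rewrite !mxE; exact: conjc_real. Qed.

Lemma adjmx_mul (C : numClosedFieldType) a b c (A : 'M[C]_(a, b)) (B : 'M[C]_(b, c)) :
  (A *m B)^t* = B^t* *m A^t*.
Proof. by rewrite trmx_mul map_mxM. Qed.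

Lemma adj_mul_self (C : numClosedFieldType) k (v : 'cV[C]_k) :
  (v^t* *m v) 0 0 = \sum_j `|v j 0| ^+ 2.
Proof. by rewrite mxE; apply: eq_bigr => j _; rewrite !mxE normCK mulrC. Qed.

Lemma Re_real_mul (R : realType) a b (N : 'M[R]_(a, b)) (v : 'cV[R[i]]_b) :
  map_mx (@complex.Re R) (cplx N *m v) = N *m map_mx (@complex.Re R) v.
Proof.
apply/matrixP => i j; rewrite !mxE raddf_sum; apply: eq_bigr => l _.
by rewrite !mxE; case: (v l j) => x y /=; rewrite mul0r subr0.
Qed.

Lemma norm2_Re (R : realType) k (v : 'cV[R[i]]_k) :
  (norm2 (map_mx (@complex.Re R) v) ^+ 2)%:C%C <= (v^t* *m v) 0 0.
Proof.
rewrite norm2_sq adj_mul_self rmorph_sum; apply: ler_sum => j _.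
by rewrite mxE -add_Re2_Im2 lecR lerDl sqr_ge0.
Qed.

Lemma adj_gram_qform (C : numClosedFieldType) r k (B : 'M[C]_(r, k)) (w : 'cV[C]_k) :
  (w^t* *m (B^t* *m B) *m w) 0 0 = \sum_j `|(B *m w) j 0| ^+ 2.
Proof. by rewrite mulmxA -adjmx_mul -mulmxA adj_mul_self. Qed.

Lemma gram_spectral (R : realType) r k (A : 'M[R]_(r, k)) :
  exists (P : 'M[R[i]]_k) (t : 'I_k -> R), [/\ P \is unitarymx, forall j, 0 <= t j &
    cplx (A^T *m A) = P^t* *m diag_mx (\row_j (t j)%:C%C) *m P].
Proof.
have gramE : cplx (A^T *m A) = (cplx A)^t* *m cplx A by rewrite map_mxM adjmx_real.
have herm : (cplx (A^T *m A))^t* = cplx (A^T *m A).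
  by rewrite gramE adjmx_mul trmxCK.
have : cplx (A^T *m A) \is normalmx by rewrite qualifE herm.
move/orthomx_spectralP; set P := spectralmx _; set X := spectral_diag _.
have Pu : P \is unitarymx := spectral_unitarymx _.
rewrite invmx_unitary // => AtAE.
have X_ge0 j : 0 <= X 0 j.
  have : diag_mx X = P *m cplx (A^T *m A) *m P^t*.
    by rewrite AtAE !mulmxA (unitarymxP Pu) mul1mx -mulmxA (unitarymxP Pu) mulmx1.
  move/matrixP/(_ j j); rewrite mxE eqxx mulr1n => ->.
  have -> : (P *m cplx (A^T *m A) *m P^t*) j j =
            ((row j P) *m cplx (A^T *m A) *m (row j P)^t*) 0 0.
    by rewrite -row_mul !mxE; apply: eq_bigr => l _; rewrite !mxE.
  by rewrite gramE -{1}[row j P]trmxCK adj_gram_qform sumr_ge0 // => l _; rewrite exprn_ge0.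
exists P, (fun j => complex.Re (X 0 j)); split => // [j|].
  by rewrite -lecR RRe_real ?ger0_real.
by rewrite AtAE; congr (_ *m diag_mx _ *m _); apply/rowP => j; rewrite mxE RRe_real ?ger0_real.
Qed.

Lemma inf_finite_attained (R : realType) (T : finType) (P : T -> Prop) (F : T -> R)
    (S : set R) :
  (forall s, S s <-> exists x, P x /\ s = F x) -> (exists x, P x) ->
  exists x0, [/\ P x0, inf S = F x0 & forall x, P x -> F x0 <= F x].
Proof.
move=> SE [x1 Px1].
have [x0 /asboolP Px0 F_min] := @arg_minP _ _ T x1 (fun x => `[< P x >]) F (asboolT Px1).
have {}F_min x : P x -> F x0 <= F x by move=> Px; apply/F_min/asboolP.
exists x0; split => //; apply/eqP; rewrite eq_le; apply/andP; split.
  by apply: ge_inf; [exists (F x0) => s /SE [x [Px ->]]; apply: F_min | apply/SE; exists x0].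
by apply: lb_le_inf => [|s /SE [x [Px ->]]]; [exists (F x0); apply/SE; exists x0 | apply: F_min].
Qed.

Section GramEigenvalues.
Variables (R : realType) (r k : nat) (A : 'M[R]_(r, k)).
Variables (P : 'M[R[i]]_k) (t : 'I_k -> R).
Hypotheses (P_unitary : P \is unitarymx) (t_ge0 : forall j, 0 <= t j).
Hypothesis gramE : cplx (A^T *m A) = P^t* *m diag_mx (\row_j (t j)%:C%C) *m P.

Lemma root_char_gram x : root (char_poly (A^T *m A)) x = [exists j, t j == x].
Proof.
rewrite root_char_poly_complex gramE -invmx_unitary // eigenvalue_conj.
  by rewrite eigenvalue_diag; apply: eq_existsb => j; rewrite mxE (inj_eq (@complexI _)).
exact: unitarymx_unit.
Qed.

Lemma gram_eigen_pos : A != 0 -> exists j, 0 < t j.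
Proof.
move=> A0; apply/existsP; apply: contraNT A0 => /existsPn t_le0.
have t0 j : t j = 0 by apply/eqP; rewrite eq_le t_ge0 andbT leNgt t_le0.
have /matrixP AtA0 : cplx (A^T *m A) = 0.
  rewrite gramE (_ : diag_mx _ = 0) ?mulmx0 ?mul0mx //.
  by apply/matrixP => a b; rewrite !mxE t0 mul0rn.
by apply/eqP/gram_eq0/matrixP => a b; have := AtA0 a b; rewrite !mxE => -[].
Qed.

Lemma sigma_min_gram :
  A != 0 -> 0 < sigma_min A /\ forall j, 0 < t j -> sigma_min A ^+ 2 <= t j.
Proof.
move=> A0.
have S_E s : 0 < s /\ root (char_poly (A^T *m A)) (s ^+ 2) <->
             exists j, 0 < t j /\ s = Num.sqrt (t j).
  rewrite root_char_gram; split.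
    move=> [s0 /existsP [j /eqP tj]]; exists j.
    by rewrite tj exprn_gt0 // sqrtr_sqr gtr0_norm.
  move=> [j [tj ->]]; rewrite sqrtr_gt0 sqr_sqrtr ?(ltW tj) //; split => //.
  by apply/existsP; exists j.
have [j0 [tj0 sigE sqrt_min]] := inf_finite_attained S_E (gram_eigen_pos A0).
rewrite /sigma_min sigE; split=> [|j tj]; first by rewrite sqrtr_gt0.
by rewrite sqr_sqrtr ?(ltW tj0) //; have := sqrt_min j tj; rewrite ler_sqrt ?(ltW tj).
Qed.

Lemma gram_qform (w : 'cV[R[i]]_k) :
  (w^t* *m cplx (A^T *m A) *m w) 0 0 = \sum_j `|(P *m w) j 0| ^+ 2 * (t j)%:C%C.
Proof.
rewrite gramE !mulmxA -adjmx_mul -mulmxA mul_mx_diag mxE.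
by apply: eq_bigr => j _; rewrite !mxE normCK; ring.
Qed.

(* [d] is the orthogonal projection of [y] onto the span of the eigenvectors of
   [A^T *m A] with positive eigenvalues, i.e. the minimal-norm preimage of [A y]. *)
Lemma min_norm_preimage_gram (y : 'cV[R]_k) : A != 0 ->
  exists d, A *m d = A *m y /\ sigma_min A * norm2 d <= norm2 (A *m y).
Proof.
move=> A0; have [sig_gt0 sig_le] := sigma_min_gram A0.
pose u := P *m cplx y.
pose u' := \col_j (if 0 < t j then u j 0 else 0).
pose dC := P^t* *m u'.
have gram_dC : cplx (A^T *m A) *m dC = cplx (A^T *m A) *m cplx y.
  rewrite gramE -!mulmxA (mulmxA P) (unitarymxP P_unitary) mul1mx -/u.
  congr (_ *m _); apply/colP => j; rewrite !mul_diag_mx !mxE.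
  by case: ltgtP (t_ge0 j) => // <- _; rewrite !mul0r.
pose d := map_mx (@complex.Re R) dC.
have norm_d : (norm2 d ^+ 2)%:C%C <= \sum_j `|u' j 0| ^+ 2.
  have := norm2_Re dC; rewrite /dC adjmx_mul trmxCK mulmxA -(mulmxA _ P).
  by rewrite (unitarymxP P_unitary) mulmx1 adj_mul_self.
have norm_Ay : (norm2 (A *m y) ^+ 2)%:C%C = \sum_j `|u j 0| ^+ 2 * (t j)%:C%C.
  by rewrite -gram_qform norm2_sqE trmx_mul adjmx_real -!map_mxM !mulmxA [RHS]mxE.
have : ((sigma_min A * norm2 d) ^+ 2)%:C%C <= (norm2 (A *m y) ^+ 2)%:C%C.
  rewrite norm_Ay exprMn rmorphM /=; apply: le_trans (ler_wpM2l _ norm_d) _.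
    by rewrite lecR exprn_ge0 // ltW.
  rewrite mulr_sumr; apply: ler_sum => j _; rewrite !mxE.
  case: ifP => tj; first by rewrite mulrC ler_wpM2l ?exprn_ge0 // lecR sig_le.
  by rewrite normr0 expr0n mulr0 mulr_ge0 ?exprn_ge0 // ler0c.
rewrite lecR ler_sqr ?nnegrE ?mulr_ge0 ?norm2_ge0 ?(ltW sig_gt0) // => sig_d.
exists d; split => //.
apply/eqP; rewrite -subr_eq0 -mulmxBr; apply/eqP/gram_kernel.
have := congr1 (map_mx (@complex.Re R)) gram_dC; rewrite !Re_real_mul mulmxBr => ->.
by rewrite -map_mx_comp map_mx_id ?subrr.
Qed.
End GramEigenvalues.

Lemma sigma_min_gt0 (R : realType) r k (A : 'M[R]_(r, k)) : A != 0 -> 0 < sigma_min A.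
Proof.
move=> A0; have [P [t [Pu t_ge0 gramE]]] := gram_spectral A.
by have [] := sigma_min_gram Pu t_ge0 gramE A0.
Qed.

Lemma min_norm_preimage (R : realType) r k (A : 'M[R]_(r, k)) (y : 'cV[R]_k) :
  A != 0 -> exists d, A *m d = A *m y /\ sigma_min A * norm2 d <= norm2 (A *m y).
Proof.
have [P [t [Pu t_ge0 gramE]]] := gram_spectral A.
exact: min_norm_preimage_gram Pu t_ge0 gramE y.
Qed.

Lemma unblk_blk m p (i : 'I_m) (j : 'I_p) : unblk (blk_idx i j) = (i, j).
Proof. by rewrite /unblk /blk_idx /mxvec_index cast_ordK enum_rankK. Qed.

Lemma blk_unblk m p (k : 'I_(m * p)) : blk_idx (unblk k).1 (unblk k).2 = k.
Proof.
by rewrite /unblk /blk_idx /mxvec_index -surjective_pairing enum_valK cast_ordKV.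
Qed.

Lemma blk_inj m p (i i' : 'I_m) (j j' : 'I_p) :
  blk_idx i j = blk_idx i' j' -> i = i' /\ j = j'.
Proof. by move/(congr1 (@unblk m p)); rewrite !unblk_blk => -[-> ->]. Qed.

Lemma sum_unblk (R : realType) a p (G : 'I_a * 'I_p -> R) :
  \sum_(r < a * p) G (unblk r) = \sum_i \sum_j G (i, j).
Proof.
rewrite pair_bigA (reindex (@unblk a p)) /=; last first.
  exists (fun q => blk_idx q.1 q.2) => [k _|q _]; first exact: blk_unblk.
  by rewrite unblk_blk -surjective_pairing.
by apply: eq_bigr => r _; rewrite -surjective_pairing.
Qed.

Section Blocks.
Variables (R : realType) (m p : nat).
Implicit Types (u v z : 'cV[R]_(m * p)).

Lemma blockD u v i : block (u + v) i = block u i + block v i.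
Proof. by apply/colP => j; rewrite !mxE. Qed.

Lemma blockN u i : block (- u) i = - block u i.
Proof. by apply/colP => j; rewrite !mxE. Qed.

Lemma blockZ (a : R) u i : block (a *: u) i = a *: block u i.
Proof. by apply/colP => j; rewrite !mxE. Qed.

Lemma norm2_sq_blocks z : norm2 z ^+ 2 = \sum_i norm2 (block z i) ^+ 2.
Proof.
pose G q := z (blk_idx q.1 q.2) 0 ^+ 2.
rewrite norm2_sq; transitivity (\sum_(k < m * p) G (unblk k)).
  by apply: eq_bigr => k _; rewrite /G blk_unblk.
rewrite sum_unblk; apply: eq_bigr => i _; rewrite norm2_sq.
by apply: eq_bigr => j _; rewrite mxE.
Qed.

Lemma norm2_Dsub_mul n (D : 'M[R]_(m * p, n)) (Lam : {set 'I_m}) (y : 'cV[R]_n) :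
  norm2 (Dsub D Lam *m y) ^+ 2 = \sum_(i in Lam) norm2 (block (D *m y) i) ^+ 2.
Proof.
pose G (q : 'I_#|Lam| * 'I_p) := (D *m y) (blk_idx (enum_val q.1) q.2) 0 ^+ 2.
rewrite norm2_sq; transitivity (\sum_(r < #|Lam| * p) G (unblk r)).
  by apply: eq_bigr => r _; rewrite /G !mxE; under eq_bigr do rewrite mxE.
rewrite sum_unblk (big_enum_val (fun i => norm2 (block (D *m y) i) ^+ 2)) /=.
by apply: eq_bigr => i _; rewrite norm2_sq; apply: eq_bigr => j _; rewrite mxE.
Qed.

Lemma Dsub_mul_eq0 n (D : 'M[R]_(m * p, n)) (Lam : {set 'I_m}) (y : 'cV[R]_n) :
  Dsub D Lam *m y = 0 -> forall i, i \in Lam -> block (D *m y) i = 0.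
Proof.
move=> Dy0 i iLam; apply: norm2_eq0.
apply: (@sum_sqr_eq0 _ _ _ (fun i => norm2 (block (D *m y) i)) _ _ iLam).
by rewrite -norm2_Dsub_mul Dy0 norm20 expr0n.
Qed.
End Blocks.

Lemma exists_set_card (m j : nat) : (j <= m)%N -> exists Lam : {set 'I_m}, #|Lam| = j.
Proof.
move=> jm; exists [set x in take j (enum 'I_m)].
rewrite cardsE; move/card_uniqP: (take_uniq j (enum_uniq 'I_m)) => ->.
by rewrite size_take size_enum_ord; case: ltngtP jm.
Qed.

Lemma exists_set_card_mem (m j : nat) (i : 'I_m) : (0 < j <= m)%N ->
  exists Lam : {set 'I_m}, #|Lam| = j /\ i \in Lam.
Proof.
move=> /andP[j_gt0 jm]; have [L0 L0j] := exists_set_card jm.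
have [iL0|iL0] := boolP (i \in L0); first by exists L0.
have [i0 i0L0] : exists i0, i0 \in L0 by apply/card_gt0P; rewrite L0j.
exists (i |: (L0 :\ i0)); split; last by rewrite setU11.
rewrite cardsU1 in_setD1 (negbTE iL0) andbF /= (cardsD1 i0 L0) i0L0 in L0j *.
by rewrite add1n -L0j.
Qed.

Section Trimmed.
Variables (R : realType) (K m p : nat).
Implicit Type z : 'cV[R]_(m * p).

Lemma trimmed_le z (Lam : {set 'I_m}) :
  #|Lam| = (m - K)%N -> trimmed K z <= \sum_(i in Lam) norm2 (block z i).
Proof.
move=> LamK; apply: ge_inf; last by exists Lam.
by exists 0 => _ [Lam' [_ ->]]; apply: sumr_ge0 => i _; exact: norm2_ge0.
Qed.

Lemma trimmed_attained z : exists Lam : {set 'I_m},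
  #|Lam| = (m - K)%N /\ trimmed K z = \sum_(i in Lam) norm2 (block z i).
Proof.
have [Lam [LamK TE _]] := @inf_finite_attained R _ (fun Lam : {set 'I_m} => #|Lam| = (m - K)%N)
  (fun Lam => \sum_(i in Lam) norm2 (block z i)) _ (fun s => iff_refl _)
  (exists_set_card (leq_subr K m)).
by exists Lam.
Qed.

Lemma trimmed_ge0 z : 0 <= trimmed K z.
Proof.
have [Lam [_ ->]] := trimmed_attained z.
by apply: sumr_ge0 => i _; exact: norm2_ge0.
Qed.
Lemma trimmed_segment z w (Lam : {set 'I_m}) (a : R) :
  #|Lam| = (m - K)%N -> trimmed K z = \sum_(i in Lam) norm2 (block z i) ->
  (forall i, i \in Lam -> block w i = - block z i) -> 0 <= a <= 1 ->
  trimmed K (z + a *: w) <= (1 - a) * trimmed K z.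
Proof.
move=> LamK TE wz /andP[a_ge0 a_le1]; apply: le_trans (trimmed_le _ LamK) _.
rewrite TE mulr_sumr; apply: ler_sum => i iLam.
rewrite blockD blockZ wz // scalerN -{1}(scale1r (block z i)) -scalerBl norm2Z.
by rewrite ger0_norm // subr_ge0.
Qed.
End Trimmed.

Section DescentDirection.
Variables (R : realType) (K m p n : nat) (D : 'M[R]_(m * p, n)).
Hypotheses (Km : (K < m)%N) (D0 : D != 0).

Lemma exists_Dsub_neq0 : exists Lam : {set 'I_m}, #|Lam| = (m - K)%N /\ Dsub D Lam != 0.
Proof.
have /existsP [k /existsP [c Dkc]] : [exists k, [exists c, D k c != 0]].
  apply: contraNT D0 => /existsPn D_eq0; apply/eqP/matrixP => a b.
  by move: (D_eq0 a) => /existsPn /(_ b); rewrite negbK mxE => /eqP.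
have mK : (0 < m - K <= m)%N by rewrite subn_gt0 Km leq_subr.
have [Lam [LamK kLam]] := exists_set_card_mem (unblk k).1 mK.
exists Lam; split => //; apply/eqP => /matrixP.
move=> /(_ (blk_idx (enum_rank_in kLam (unblk k).1) (unblk k).2) c) /eqP.
by rewrite !mxE unblk_blk /= enum_rankK_in // blk_unblk (negbTE Dkc).
Qed.

Lemma sigma_Kmp_nonsurj : ~ surjective_mx D ->
  exists Lam : {set 'I_m}, [/\ #|Lam| = (m - K)%N, Dsub D Lam != 0,
    sigma_Kmp K D = sigma_min (Dsub D Lam) &
    forall Lam' : {set 'I_m}, #|Lam'| = (m - K)%N -> Dsub D Lam' != 0 ->
      sigma_Kmp K D <= sigma_min (Dsub D Lam')].
Proof.
move=> Dnsurj; rewrite /sigma_Kmp asboolF //.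
have S_E s : (exists Lam : {set 'I_m},
    [/\ #|Lam| = (m - K)%N, Dsub D Lam != 0 & s = sigma_min (Dsub D Lam)]) <->
    exists Lam : {set 'I_m},
      (#|Lam| = (m - K)%N /\ Dsub D Lam != 0) /\ s = sigma_min (Dsub D Lam).
  by split=> [[Lam [? ? ->]]|[Lam [[? ?] ->]]]; exists Lam.
have [Lam [[LamK DLam0] -> sig_min]] := inf_finite_attained S_E exists_Dsub_neq0.
by exists Lam; split => // Lam' LamK' DLam0'; apply: sig_min.
Qed.

Lemma sigma_Kmp_gt0 : 0 < sigma_Kmp K D.
Proof.
case: (pselect (surjective_mx D)) => [Dsurj|Dnsurj].
  by rewrite /sigma_Kmp asboolT //; exact: sigma_min_gt0.
by have [Lam [_ DLam0 -> _]] := sigma_Kmp_nonsurj Dnsurj; exact: sigma_min_gt0.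
Qed.

Lemma trimmed_descent_direction (v : 'cV[R]_n) (Lam : {set 'I_m}) :
  #|Lam| = (m - K)%N ->
  exists d, (forall i, i \in Lam -> block (D *m d) i = - block (D *m v) i) /\
    sigma_Kmp K D * norm2 d <= Num.sqrt (\sum_(i in Lam) norm2 (block (D *m v) i) ^+ 2).
Proof.
move=> LamK; case: (pselect (surjective_mx D)) => [Dsurj|Dnsurj].
  pose w := \col_k (if (unblk k).1 \in Lam then - (D *m v) k 0 else 0).
  have block_w i : block w i = if i \in Lam then - block (D *m v) i else 0.
    by apply/colP => j; rewrite !mxE unblk_blk /=; case: ifP; rewrite ?mxE.
  have [y Dy] := Dsurj w.
  have [d [Dd sig_d]] := min_norm_preimage y D0.
  exists d; split => [i iLam|]; first by rewrite Dd Dy block_w iLam.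
  rewrite /sigma_Kmp asboolT //; apply: (le_trans sig_d).
  rewrite Dy -(ger0_norm (norm2_ge0 w)) -sqrtr_sqr norm2_sq_blocks big_mkcond /=.
  under eq_bigr do rewrite block_w (fun_if (fun x => norm2 x ^+ 2)) norm2N norm20.
  by under eq_bigr do rewrite expr0n mulr0n; rewrite -big_mkcond.
have [DLam0|DLam0] := eqVneq (Dsub D Lam) 0.
  exists 0; split => [i iLam|]; last by rewrite norm20 mulr0 sqrtr_ge0.
  have := Dsub_mul_eq0 (D := D) (Lam := Lam) (y := v).
  rewrite DLam0 mul0mx => /(_ erefl i iLam) ->.
  by rewrite mulmx0 oppr0; apply/colP => j; rewrite !mxE.
have [d [Dd sig_d]] := min_norm_preimage (- v) DLam0.
exists d; split => [i iLam|].
  have := Dsub_mul_eq0 (D := D) (Lam := Lam) (y := d + v); rewrite mulmxDr Dd mulmxN addNr.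
  by move=> /(_ erefl i iLam) /eqP; rewrite mulmxDr blockD addr_eq0 => /eqP.
have [_ [_ _ _ sig_le]] := sigma_Kmp_nonsurj Dnsurj.
apply: le_trans (ler_wpM2r (norm2_ge0 d) (sig_le _ LamK DLam0)) _.
apply: (le_trans sig_d); rewrite -(ger0_norm (norm2_ge0 _)) -sqrtr_sqr norm2_Dsub_mul.
by under eq_bigr do rewrite mulmxN blockN norm2N.
Qed.
End DescentDirection.

Section Embedding.
Variables (R : realType) (N : nat) (n : 'I_N -> nat).

Lemma embed_self (l : 'I_N) (d : 'cV[R]_(n l)) : embed d l = d.
Proof. by rewrite /embed; case: eqP => // e; exact: castmx_id. Qed.

Lemma embed_other (l i : 'I_N) (d : 'cV[R]_(n l)) : i != l -> embed d i = 0.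
Proof. by move=> il; rewrite /embed; case: eqP => // li; rewrite li eqxx in il. Qed.

Lemma dstationary_descent (F g : pvec R n -> R) (xs e : pvec R n) (kappa a : R) :
  dstationary F xs -> (exists v, has_dderiv g xs e v) -> 0 < a ->
  (forall s, 0 < s -> s <= a -> F (padd xs (pscale s e)) - F xs <=
     g (padd xs (pscale s e)) - g xs - s * kappa) ->
  kappa <= dderiv g xs e.
Proof.
move=> /(_ e) [v [Fv v_ge0]] [w gw] a_gt0 Fg.
have -> : dderiv g xs e = w.
  exact: (@cvg_lim _ (@norm_hausdorff _ _) _ _ (at_right_proper_filter 0) _ _ gw).
have gw_kappa : (fun s => dquot g xs e s - kappa) @ 0^'+ --> w - kappa.
  by apply: cvgB => //; exact: cvg_cst.
rewrite -subr_ge0; apply: le_trans v_ge0 _.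
apply: (ler_cvg_to Fv gw_kappa); near=> s.
have s_gt0 : 0 < s by near: s; exact: nbhs_right_gt.
have s_le_a : s <= a by near: s; exact: nbhs_right_le.
rewrite /dquot ler_pdivrMr // mulrBl divfK ?gt_eqF // (mulrC kappa).
exact: Fg.
Unshelve. all: by end_near.
Qed.
End Embedding.

Section ObjectiveShift.
Variables (R : realType) (L : nat) (n : 'I_L.+1 -> nat).
Variables (xs : pvec R n) (l : 'I_L) (d : 'cV[R]_(n (lift ord0 l))) (s : R).
Let xs' := padd xs (pscale s (embed d)).

Lemma sum_embed_shift (phi : forall k : 'I_L, 'cV[R]_(n (lift ord0 k)) -> R) :
  \sum_k phi k (xs' (lift ord0 k)) - \sum_k phi k (xs (lift ord0 k)) =
  phi l (xs (lift ord0 l) + s *: d) - phi l (xs (lift ord0 l)).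
Proof.
rewrite (bigD1 l) //= [X in _ - X](bigD1 l) //= opprD addrACA.
rewrite [X in _ + X](_ : _ = 0) ?addr0; last first.
  rewrite -sumrB big1 // => k kl; rewrite /xs' /padd /pscale embed_other.
    by rewrite scaler0 addr0 subrr.
  by rewrite (inj_eq (@lift_inj _ ord0)).
by rewrite /xs' /padd /pscale embed_self.
Qed.

Lemma objective_embed_shift (m p K : 'I_L -> nat) (gam : 'I_L -> R)
    (c : forall l : 'I_L, 'cV[R]_(m l * p l))
    (D : forall l : 'I_L, 'M[R]_(m l * p l, n (lift ord0 l))) (f : pvec R n -> R) :
  objective K gam c D f xs' - objective K gam c D f xs =
  (f xs' - f xs) +
  (gam l * trimmed (K l) (D l *m (xs (lift ord0 l) + s *: d) - c l) -
   gam l * trimmed (K l) (D l *m xs (lift ord0 l) - c l)).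
Proof.
rewrite /objective opprD addrACA; congr (_ + _).
exact: (sum_embed_shift (fun k v => gam k * trimmed (K k) (D k *m v - c k))).
Qed.
End ObjectiveShift.

Section CoordinateDirection.
Variables (R : realType) (n : nat) (x : 'cV[R]_n) (k : 'I_n).

Definition coord_dir : 'cV[R]_n := \col_j (if j == k then - Num.sg (x k 0) else 0).

Lemma coord_dir_entries j : coord_dir j 0 \in [:: -1; 0; 1].
Proof.
rewrite mxE; case: ifP => _; rewrite !inE ?eqxx ?orbT //.
by case: sgrP => _; rewrite ?oppr0 ?opprK eqxx ?orbT.
Qed.

Lemma norm1_coord_dir : x k 0 != 0 -> norm1 coord_dir = 1.
Proof.
move=> xk0; rewrite /norm1 (bigD1 k) //= big1 => [|j /negbTE jk]; last first.
  by rewrite mxE jk normr0.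
by rewrite mxE eqxx normrN normr_sg xk0 addr0.
Qed.

Lemma coord_dir_other (s : R) j : j != k -> (x + s *: coord_dir) j 0 = x j 0.
Proof. by move=> /negbTE jk; rewrite !mxE jk mulr0 addr0. Qed.

Lemma abs_coord_dir_self (s : R) : 0 <= s <= `|x k 0| ->
  `|(x + s *: coord_dir) k 0| = `|x k 0| - s.
Proof.
move=> /andP[s_ge0 s_le]; have [xk0|xk0] := eqVneq (x k 0) 0.
  move: s_le; rewrite xk0 normr0 => s_le0.
  have -> : s = 0 by apply/eqP; rewrite eq_le s_le0 s_ge0.
  by rewrite scale0r addr0 xk0 normr0 subr0.
rewrite !mxE eqxx {1}[x k 0]numEsg mulrN mulrC -mulrBl.
by rewrite normrM normr_sg xk0 mulr1 ger0_norm // subr_ge0.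
Qed.

Lemma norm1_coord_dir_shift (s : R) : 0 <= s <= `|x k 0| ->
  norm1 (x + s *: coord_dir) = norm1 x - s.
Proof.
move=> s_range; rewrite /norm1 (bigD1 k) //= [in RHS](bigD1 k) //= abs_coord_dir_self //.
rewrite addrAC; congr (_ + _ - _); apply: eq_bigr => j jk; congr `|_|.
exact: coord_dir_other.
Qed.
End CoordinateDirection.

Lemma identity_block_norm2 (R : realType) (m p n : nat) (D : 'M[R]_(m * p, n)) :
  p = 1%N -> m = n -> (forall i j, D i j = (nat_of_ord i == nat_of_ord j)%:R) ->
  exists2 sig : 'I_m -> 'I_n, injective sig &
    forall v i, norm2 (block (D *m v) i) = `|v (sig i) 0|.
Proof.
move=> p1 mn DE; subst p.
have E : (m * 1 = n)%N by rewrite muln1.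
exists (fun i => cast_ord E (blk_idx i ord0)) => [i i' /cast_ord_inj /blk_inj []//|v i].
rewrite /norm2 big_ord1 sqrtr_sqr !mxE (bigD1 (cast_ord E (blk_idx i ord0))) //=.
rewrite DE eqxx mul1r big1 ?addr0 // => j ji; rewrite DE.
have ij : (nat_of_ord (blk_idx i (ord0 : 'I_1)) == j) = false.
  by apply/negbTE; apply: contra ji => /eqP ij; apply/eqP/val_inj.
by rewrite ij mul0r.
Qed.

Section TrimmedLasso.
Variables (R : realType) (L : nat) (n : 'I_L.+1 -> nat) (m p K : 'I_L -> nat).
Variables (gam : 'I_L -> R) (c : forall l : 'I_L, 'cV[R]_(m l * p l)).
Variable D : forall l : 'I_L, 'M[R]_(m l * p l, n (lift ord0 l)).
Hypotheses (gam_gt0 : forall l, 0 < gam l) (Km : forall l, (K l < m l)%N).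

Lemma trimmed_eq0_dstationary (f : pvec R n -> R) (xs : pvec R n) (l : 'I_L) (Gam : R) :
  D l != 0 -> dir_differentiable f -> dstationary (objective K gam c D f) xs ->
  (exists xb, D l *m xb - c l = 0) ->
  (forall d : 'cV[R]_(n (lift ord0 l)), norm2 d = 1 -> dderiv f xs (embed d) <= Gam) ->
  Gam / sigma_Kmp (K l) (D l) < gam l ->
  trimmed (K l) (D l *m xs (lift ord0 l) - c l) = 0.
Proof.
move=> Dl0 f_dd xs_dstat [xb Dxb] f_bound gam_large.
set x := xs (lift ord0 l); set T := trimmed _ _.
apply/eqP; rewrite eq_le trimmed_ge0 andbT leNgt; apply/negP => T_gt0.
have [Lam [LamK TE]] := trimmed_attained (K l) (D l *m x - c l); rewrite -/T in TE.
have cE : c l = D l *m xb by apply/eqP; rewrite eq_sym -subr_eq0 Dxb.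
have [d [Dd sig_d]] := trimmed_descent_direction (Km l) Dl0 (x - xb) LamK.
rewrite mulmxBr -cE in Dd sig_d.
have sig_d_T : sigma_Kmp (K l) (D l) * norm2 d <= T.
  by apply: le_trans sig_d _; rewrite TE sqrt_sum_sqr_le // => i; exact: norm2_ge0.
have d_gt0 : 0 < norm2 d.
  rewrite lt_def norm2_ge0 andbT; apply: contraTneq T_gt0 => /norm2_eq0 d0.
  rewrite TE big1 ?ltxx // => i iLam; rewrite -norm2N -Dd // d0 mulmx0.
  by rewrite -(scale0r (0 : 'cV[R]_(m l * p l))) blockZ norm2Z normr0 mul0r.
pose e := (norm2 d)^-1 *: d.
have e_unit : norm2 e = 1.
  by rewrite norm2Z ger0_norm ?invr_ge0 ?norm2_ge0 // mulVf ?gt_eqF.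
have : gam l * T / norm2 d <= dderiv f xs (embed e).
  apply: (dstationary_descent xs_dstat (f_dd xs (embed e)) d_gt0) => s s_gt0 s_le.
  rewrite objective_embed_shift lerD2l.
  have -> : D l *m (x + s *: e) - c l = (D l *m x - c l) + (s / norm2 d) *: (D l *m d).
    by rewrite mulmxDr !scalemxAr scalerA addrAC mulrC.
  apply: le_trans (_ : gam l * ((1 - s / norm2 d) * T) - gam l * T <= _).
    rewrite lerD2r ler_wpM2l ?(ltW (gam_gt0 l)) //; apply: trimmed_segment LamK TE Dd _.
    by rewrite divr_ge0 ?(ltW s_gt0) ?norm2_ge0 //= ler_pdivrMr // mul1r.
  by rewrite le_eqVlt; apply/orP; left; apply/eqP; ring.
move=> /le_trans /(_ (f_bound e e_unit)); rewrite ler_pdivrMr // => gamT_le.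
move: gam_large; rewrite ltr_pdivrMr ?sigma_Kmp_gt0 // => Gam_lt.
have : gam l * T < gam l * T.
  apply: (le_lt_trans gamT_le).
  apply: (@lt_le_trans _ _ (gam l * sigma_Kmp (K l) (D l) * norm2 d)).
    by rewrite ltr_pM2r.
  by rewrite -mulrA ler_wpM2l ?(ltW (gam_gt0 l)).
by rewrite ltxx.
Qed.

Lemma trimmed_eq0_dstationary_l1 (g f : pvec R n -> R) (eta : 'I_L -> R) (xs : pvec R n)
    (l : 'I_L) (Gam : R) :
  dir_differentiable g ->
  f = (fun x => g x + \sum_(k < L) eta k * norm1 (x (lift ord0 k))) ->
  p l = 1%N -> m l = n (lift ord0 l) ->
  (forall i j, D l i j = (nat_of_ord i == nat_of_ord j)%:R) -> c l = 0 ->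
  dstationary (objective K gam c D f) xs ->
  (forall d : 'cV[R]_(n (lift ord0 l)),
     (forall i, d i 0 \in [:: -1; 0; 1]) -> norm1 d = 1 ->
     dderiv g xs (embed d) - eta l <= Gam) ->
  Gam < gam l ->
  trimmed (K l) (D l *m xs (lift ord0 l) - c l) = 0.
Proof.
move=> g_dd -> pl ml Dl cl xs_dstat g_bound gam_large.
have [sig sig_inj Dnorm] := identity_block_norm2 pl ml Dl.
set x := xs (lift ord0 l); rewrite cl subr0; set T := trimmed _ _.
apply/eqP; rewrite eq_le trimmed_ge0 andbT leNgt; apply/negP => T_gt0.
have [Lam [LamK TE]] := trimmed_attained (K l) (D l *m x); rewrite -/T in TE.
have [i iLam xi0] : exists2 i, i \in Lam & x (sig i) 0 != 0.
  apply/exists_inP; apply: contraTT T_gt0 => /exists_inPn x0.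
  rewrite TE big1 ?ltxx // => i iLam; rewrite Dnorm.
  by have := x0 i iLam; rewrite negbK => /eqP ->; rewrite normr0.
pose d := coord_dir x (sig i).
have : eta l + gam l <= dderiv g xs (embed d).
  apply: (dstationary_descent (a := `|x (sig i) 0|) xs_dstat (g_dd xs (embed d))).
    by rewrite normr_gt0.
  move=> s s_gt0 s_le.
  have s_range : 0 <= s <= `|x (sig i) 0| by rewrite (ltW s_gt0).
  have T'_le : trimmed (K l) (D l *m (x + s *: d)) <= T - s.
    apply: le_trans (trimmed_le _ LamK) _.
    rewrite TE (bigD1 i) //= [in leRHS](bigD1 i) //= !Dnorm abs_coord_dir_self //.
    rewrite [leRHS]addrAC lerD2l; apply: ler_sum => j /andP[_ ji].
    by rewrite !Dnorm coord_dir_other ?(inj_eq sig_inj).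
  have := ler_wpM2l (ltW (gam_gt0 l)) T'_le.
  have := sum_embed_shift xs d s (fun k v => eta k * norm1 v).
  rewrite /= norm1_coord_dir_shift // objective_embed_shift /= cl !subr0.
  lra.
have := g_bound d (coord_dir_entries _ _) (norm1_coord_dir xi0).
lra.
Qed.
End TrimmedLasso.

Theorem mainTheorem4 (R : realType) (L : nat) (n : 'I_L.+1 -> nat)
  (m p K : 'I_L -> nat) (gam : 'I_L -> R)
  (c : forall l : 'I_L, 'cV[R]_(m l * p l))
  (D : forall l : 'I_L, 'M[R]_(m l * p l, n (lift ord0 l))) :
  (forall l, 0 < gam l) ->
  (forall l, (K l < m l)%N) ->
  (forall l, D l != 0) ->
  (forall (f : pvec R n -> R) (xs : pvec R n) (l : 'I_L) (Gam : R),
     dir_differentiable f ->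
     dstationary (@objective R L n m p K gam c D f) xs ->
     (exists xb : 'cV[R]_(n (lift ord0 l)), D l *m xb - c l = 0) ->
     0 < Gam ->
     (forall d : 'cV[R]_(n (lift ord0 l)),
        norm2 d = 1 -> dderiv f xs (embed d) <= Gam) ->
     Gam / sigma_Kmp (K l) (D l) < gam l ->
     trimmed (K l) (D l *m xs (lift ord0 l) - c l) = 0)
  /\
  (forall (g f : pvec R n -> R) (eta : 'I_L -> R) (xs : pvec R n) (l : 'I_L)
          (Gam : R),
     (forall k, 0 <= eta k) ->
     dir_differentiable g ->
     f = (fun x => g x + \sum_(k < L) eta k * norm1 (x (lift ord0 k))) ->
     p l = 1%N ->
     m l = n (lift ord0 l) ->
     (forall i j, D l i j = (nat_of_ord i == nat_of_ord j)%:R) ->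
     c l = 0 ->
     dstationary (@objective R L n m p K gam c D f) xs ->
     (forall d : 'cV[R]_(n (lift ord0 l)),
        (forall i, d i 0 \in [:: -1; 0; 1]) -> norm1 d = 1 ->
        dderiv g xs (embed d) - eta l <= Gam) ->
     Gam < gam l ->
     trimmed (K l) (D l *m xs (lift ord0 l) - c l) = 0).
Proof.
move=> gam_gt0 Km D0; split.
  move=> f xs l Gam f_dd xs_dstat xb_ex _ f_bound gam_large.
  exact: (trimmed_eq0_dstationary gam_gt0 Km (D0 l) f_dd xs_dstat xb_ex f_bound gam_large).
move=> g f eta xs l Gam _ g_dd fE pl ml Dl cl xs_dstat g_bound gam_large.
exact: (trimmed_eq0_dstationary_l1 gam_gt0 g_dd fE pl ml Dl cl xs_dstat g_bound gam_large).
Qed.
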